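(* Let $F$ be a positive integer, $l$ a non-negative integer, and $S$ a numerical semigroup with $\mathrm{F}(S)=F$. The following are equivalent: (1) $\mathrm{l}(S)=l$ and $l\ge 2$; (2) there exist a numerical semigroup $T$ with $\mathrm{F}(T)=F$ and $x\in\mathrm{msg}(T)$ such that $\mathrm{l}(T)=l-2$, $\frac{F}{2}<x<F$, and $S=T\setminus\{x\}$.
   Context: A numerical semigroup is a subset $S\subseteq\mathbb{N}$ closed under addition with $0\in S$ and $\mathbb{N}\setminus S$ finite; $\mathrm{F}(S)=\max(\mathbb{Z}\setminus S)$. $\mathrm{msg}(T)$ is the minimal system of generators of $T$. $\mathrm{N}(S)=\{s\in S\mid s<\mathrm{F}(S)\}$, $\mathrm{L}(S)=\{x\in\mathbb{N}\setminus S\mid \mathrm{F}(S)-x\notin \mathrm{N}(S)\}$, $\mathrm{l}(S)=\#\mathrm{L}(S)$. *)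

From mathcomp Require Import all_boot.
Set Implicit Arguments. Unset Strict Implicit. Unset Printing Implicit Defensive.

Definition numerical_semigroup (S : pred nat) : Prop :=
  [/\ 0 \in S,
      (forall a b, a \in S -> b \in S -> a + b \in S)
    & exists N, forall n, N <= n -> n \in S].

(* Frobenius number: F(S) = max (Z \ S) = F, for F a natural number.
   Negative integers are never in S, so for F >= 0 this literally says
   F \notin S and every integer > F lies in S. *)
Definition frobenius_is (S : pred nat) (F : nat) : Prop :=
  F \notin S /\ forall n, F < n -> n \in S.

Definition in_msg (T : pred nat) (x : nat) : bool :=
  [&& x \in T, 0 < x &
      ~~ [exists a : 'I_x.+1, [exists b : 'I_x.+1,
            [&& 0 < a, 0 < b, (a : nat) \in T, (b : nat) \in T & a + b == x]]]].

Definition small_elts (S : pred nat) (F : nat) : pred nat :=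
  fun s => (s \in S) && (s < F).

(* L(S) = { x in N \ S | F - x \notin N(S) }, where F = F(S).
   Every gap x satisfies x <= F, so L(S) is the filter of [0..F]. *)
Definition Lset (S : pred nat) (F : nat) : seq nat :=
  [seq x <- iota 0 F.+1 | (x \notin S) && ~~ small_elts S F (F - x)].

Definition lnum (S : pred nat) (F : nat) : nat := size (Lset S F).

(* Removing from T a minimal generator x with F/2 < x < F adds exactly x and
   F - x to L: neither lies in L(T), because x \in N(T), but both lie in
   L(T \ {x}), because F - x \notin T; no other element changes status.
   Conversely, if l(S) >= 2 then, since L(S) is stable under y |-> F - y and
   cannot contain F/2 twice, L(S) has an element above F/2; its largest
   element x satisfies x + s \in S for every nonzero s \in S (otherwise x + s
   would be a larger element of L(S)), so T := S \cup {x} is a numerical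
   semigroup in which x is a minimal generator. *)
From mathcomp Require Import all_boot zify.

Set Implicit Arguments.
Unset Strict Implicit.
Unset Printing Implicit Defensive.

Definition add_elt (S : pred nat) (x : nat) : pred nat :=
  fun y => (y \in S) || (y == x).

Lemma in_add_elt (S : pred nat) x y : (y \in add_elt S x) = (y \in S) || (y == x).
Proof. by []. Qed.

Lemma mem_Lset (S : pred nat) F y : (y \in Lset S F) =
  [&& y <= F, y \notin S & ~~ ((F - y \in S) && (F - y < F))].
Proof. by rewrite mem_filter mem_iota /small_elts add0n ltnS andbC andbA. Qed.

Lemma lnum_remove_elt (S T : pred nat) F x :
  x \in T -> F - x \notin T -> x < F -> F < 2 * x ->
  (forall y, (y \in S) = (y \in T) && (y != x)) -> lnum S F = lnum T F + 2.
Proof.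
move=> xT FxT xF Fx defS.
rewrite /lnum /Lset !size_filter; set s := iota 0 F.+1.
set inLT := fun y => (y \notin T) && ~~ small_elts T F (F - y).
set new := predU (pred1 x) (pred1 (F - x)).
have FFx : F - (F - x) = x by lia.
have splitL : count (fun y => (y \notin S) && ~~ small_elts S F (F - y)) s
              = count (predU inLT new) s.
  apply: eq_count => y; rewrite /inLT /small_elts /= !defS.
  have [->|nyx] := eqVneq y x; first by rewrite (negbTE FxT) andbF /= orbT.
  have [->|nyFx] := eqVneq y (F - x).
    by rewrite FFx (negbTE FxT) eqxx andbF /= !orbT.
  have nFy : F - y != x by apply/eqP; lia.
  by rewrite nFy /= !andbT !orbF.
have disjL : count (predI inLT new) s = 0.
  apply/eqP; rewrite -leqn0 leqNgt -has_count; apply/hasPn => y _ /=.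
  rewrite /inLT /small_elts; have [->|nyx] := eqVneq y x; first by rewrite xT.
  have [->|_] := eqVneq y (F - x); last by rewrite andbF.
  by rewrite FFx xT xF andbF.
have count_new : count new s = 2.
  have disj_new : count (predI (pred1 x) (pred1 (F - x))) s = 0.
    by apply/eqP; rewrite -leqn0 leqNgt -has_count; apply/hasPn => y _ /=;
       apply/negP => /andP[/eqP -> /eqP]; lia.
  have := count_predUI (pred1 x) (pred1 (F - x)) s.
  rewrite disj_new addn0 => ->.
  by rewrite !count_uniq_mem ?iota_uniq // !mem_iota !add0n !ltnS (ltnW xF) leq_subr.
by rewrite splitL -count_new -count_predUI disjL addn0.
Qed.

Section LsetStructure.

Context {S : pred nat} {F : nat}.
Hypotheses (S0 : 0 \in S) (F0 : 0 < F).

Lemma Lset_bounds {y} : y \in Lset S F -> 0 < y < F.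
Proof.
rewrite mem_Lset => /and3P[yF yS hy].
have y0 : 0 < y by rewrite lt0n; apply: contraNneq yS => ->.
rewrite y0 ltn_neqAle yF andbT /=.
by apply: contraNneq hy => ->; rewrite subnn S0.
Qed.

Lemma Lset_sym {y} : y \in Lset S F -> F - y \in Lset S F.
Proof.
move=> yL; have /andP[y0 yF] := Lset_bounds yL.
move: yL; rewrite !mem_Lset => /and3P[_ yS hy].
have FyS : F - y \notin S by apply: contra hy => ->; rewrite andTb; lia.
have -> : F - (F - y) = y by lia.
by rewrite leq_subr FyS (negbTE yS).
Qed.

Lemma Lset_upper_half : 2 <= lnum S F -> exists2 y, y \in Lset S F & F < 2 * y.
Proof.
move=> l2; apply/hasP; apply: contraTT l2 => /hasPn low.
have sub : {subset Lset S F <= [:: F %/ 2]}.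
  move=> y yL; have /andP[_ yF] := Lset_bounds yL.
  have := low _ yL; have := low _ (Lset_sym yL).
  by rewrite inE -!leqNgt => ? ?; apply/eqP; lia.
have := uniq_leq_size (filter_uniq _ (iota_uniq 0 F.+1)) sub.
by rewrite /lnum -ltnNge.
Qed.

End LsetStructure.

Lemma add_eltK (S : pred nat) x :
  x \notin S -> forall y, (y \in S) = (y \in add_elt S x) && (y != x).
Proof.
move=> xS y; rewrite in_add_elt.
by have [->|_] := eqVneq y x; [rewrite (negbTE xS)|rewrite orbF andbT].
Qed.

Lemma numerical_semigroup_add_elt (S : pred nat) x :
  numerical_semigroup S -> x + x \in S ->
  (forall b, b \in S -> 0 < b -> x + b \in S) ->
  numerical_semigroup (add_elt S x).
Proof.
case=> S0 addS [N HN] xx addx; split.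
- by rewrite in_add_elt S0.
- have addxT b : b \in S -> (x + b \in S) || (x + b == x).
    by move=> bS; have [->|b0] := posnP b; rewrite ?addn0 ?eqxx ?orbT ?addx.
  move=> a b; rewrite !in_add_elt => /orP[aS|/eqP->] /orP[bS|/eqP->].
  + by rewrite addS.
  + by rewrite addnC addxT.
  + exact: addxT.
  + by rewrite xx.
- by exists N => n /HN nS; rewrite in_add_elt nS.
Qed.

Lemma in_msg_add_elt (S : pred nat) x :
  0 < x -> x \notin S -> (forall a b, a \in S -> b \in S -> a + b \in S) ->
  in_msg (add_elt S x) x.
Proof.
move=> x0 xS addS; rewrite /in_msg in_add_elt eqxx orbT x0 /=.
apply/negP => /existsP[a /existsP[b /and5P[a0 b0 aT bT /eqP ab]]].
have aS : (a : nat) \in S by move: aT; rewrite in_add_elt orbC eqn_leq leqNgt; lia.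
have bS : (b : nat) \in S by move: bT; rewrite in_add_elt orbC eqn_leq leqNgt; lia.
by move: (addS _ _ aS bS); rewrite ab (negbTE xS).
Qed.

Lemma Lset_max_add_closed (S : pred nat) F x :
  0 < F -> numerical_semigroup S -> frobenius_is S F ->
  x \in Lset S F -> (forall y, y \in Lset S F -> y <= x) ->
  forall b, b \in S -> 0 < b -> x + b \in S.
Proof.
move=> F0 [S0 addS _] [_ FgtS] xL xmax b bS b0; apply: contraT => xbS.
have /andP[_ xF] := Lset_bounds S0 F0 xL.
have FxS : F - x \notin S by move: (Lset_sym S0 F0 xL); rewrite mem_Lset => /and3P[].
have xbF : x + b < F.
  rewrite ltnNge; apply: contra xbS; rewrite leq_eqVlt => /orP[/eqP xbF|/FgtS//].
  by move: FxS; rewrite xbF addKn bS.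
suff /xmax : x + b \in Lset S F by lia.
rewrite mem_Lset xbS (ltnW xbF) /=; apply/negP => /andP[/addS /(_ bS)].
have -> : F - (x + b) + b = F - x by lia.
by rewrite (negbTE FxS).
Qed.

Theorem proposition10 (F l : nat) (S : pred nat) :
  0 < F -> numerical_semigroup S -> frobenius_is S F ->
  ((lnum S F = l /\ 2 <= l) <->
   exists (T : pred nat) (x : nat),
     [/\ numerical_semigroup T /\ frobenius_is T F, in_msg T x,
         lnum T F + 2 = l,
         F < 2 * x /\ x < F
       & forall y, (y \in S) = (y \in T) && (y != x)]).
Proof.
move=> F0 sgS frS; split; last first.
  move=> [T [x [[[_ addT _] [FT _]] /and3P[xT _ _] <- [Fx xF] defS]]].
  have FxT : F - x \notin T.
    by apply: contra FT => /(addT _ _ xT); rewrite subnKC // ltnW.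
  by rewrite (lnum_remove_elt xT FxT xF Fx defS); split; lia.
move=> [<- l2]; have [S0 addS _] := sgS; have [FS FgtS] := frS.
have [x1 x1L Fx1] := Lset_upper_half S0 F0 l2.
have Lle y : y \in Lset S F -> y <= F by move/(Lset_bounds S0 F0)/andP=> [_ /ltnW].
have [x xL xmax] := ex_maxnP (ex_intro _ x1 x1L) Lle.
have {}xL : x \in Lset S F := xL.
have Fx : F < 2 * x by have := xmax _ x1L; lia.
have /andP[x0 xF] := Lset_bounds S0 F0 xL.
have xS : x \notin S by move: xL; rewrite mem_Lset => /and3P[].
have FxS : F - x \notin S by move: (Lset_sym S0 F0 xL); rewrite mem_Lset => /and3P[].
have defS := add_eltK xS.
exists (add_elt S x), x; split.
- split.
    apply: numerical_semigroup_add_elt sgS _ (Lset_max_add_closed F0 sgS frS xL xmax).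
    by rewrite FgtS //; lia.
  by split=> [|n /FgtS nS]; rewrite in_add_elt ?nS // negb_or FS; apply/eqP; lia.
- exact: in_msg_add_elt.
- apply/esym/(lnum_remove_elt _ _ xF Fx defS); first by rewrite in_add_elt eqxx orbT.
  by rewrite in_add_elt negb_or FxS; apply/eqP; lia.
- by [].
- exact: defS.
Qed.
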